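(* Let $n\geqslant 3$, let $S$ be a caterpillar species tree with canonical label vector $(s_1,\dots,s_n)$, and let $k_s,k_\ell\in\{1,\dots,n\}$ with $k_s<k_\ell$ and $k_\ell\neq 2$. Let $G$ be the caterpillar gene tree obtained from $S$ by reverse incrementation on positions $k_s,\dots,k_\ell$, i.e. with canonical label vector $(g_1,\dots,g_n)$ given by $g_k=s_{k+1}$ for $k_s\leqslant k<k_\ell$, $g_{k_\ell}=s_{k_s}$, and $g_k=s_k$ for $k\notin\{k_s,\dots,k_\ell\}$. Then the roadblock set $B_{G,S}$ consists of a set of consecutive points on the diagonal of the square lattice, i.e. $B_{G,S}=\{(i,i): a\leqslant i\leqslant b\}$ for some integers $a\leqslant b$.
   Context: All trees are binary, rooted, leaf-labeled. A caterpillar tree with $n$ leaves is one in which some internal node is descended from all other internal nodes. Its canonical label vector $(x_1,\dots,x_n)$ has $x_1,x_2$ the labels of the two leaves of the cherry (unique internal node with two descendant leaves) and, for $3\leqslant i\leqslant n$, $x_i$ the label of the leaf separated from the root by $n-i+1$ edges; vectors differing only by swapping $x_1,x_2$ describe the same tree. For caterpillars $G,S$ with canonical vectors $\mathbf g,\mathbf s$, let $\sigma(x)$ be the index of label $x$ in $\mathbf s$, $F(j)=\max\{\sigma(g_1),\dots,\sigma(g_{j+1})\}-1$ for $1\leqslant j\leqslant n-1$, and define the roadblock set $B_{G,S}=\{(i,j)\in\mathbb Z^2:1\leqslant j\leqslant i\leqslant n-1,\ i<F(j)\}$. *)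

From mathcomp Require Import all_boot.
Set Implicit Arguments. Unset Strict Implicit. Unset Printing Implicit Defensive.

(* A canonical label vector (x_1,...,x_n) is encoded as a function
   x : nat -> T read on the 1-based indices 1..n. *)

Definition label_vector (T : eqType) (n : nat) (x : nat -> T) : Prop :=
  {in [pred i | 1 <= i <= n] &, injective x}.

Definition sigma (T : eqType) (n : nat) (s : nat -> T) (x : T) : nat :=
  (index x [seq s i | i <- iota 1 n]).+1.

Definition Froad (T : eqType) (n : nat) (g s : nat -> T) (j : nat) : nat :=
  (\max_(1 <= k < j.+2) sigma n s (g k)) - 1.

Definition roadblock (T : eqType) (n : nat) (g s : nat -> T) (i j : nat) : Prop :=
  [/\ 1 <= j, j <= i, i <= n - 1 & i < Froad n g s j].

Definition rev_incr (T : Type) (s : nat -> T) (ks kl : nat) : nat -> T :=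
  fun k => if (ks <= k) && (k < kl) then s k.+1
           else if k == kl then s ks else s k.

From mathcomp Require Import all_boot.
From mathcomp Require Import zify.

(* Writing the gene tree as [g = s \o p] for an index permutation [p], one has
   [sigma (g k) = p k], so [F(j) + 1] is the prefix maximum of [p] up to [j+1].
   For reverse incrementation that prefix maximum overshoots [j+1] by exactly
   one when [ks <= j+1 < kl] and equals [j+1] otherwise; hence [j <= i < F(j)]
   forces [i = j], and the admissible [j] form the interval [ks-1 .. kl-2]. *)

Lemma sigma_label (T : eqType) (n : nat) (s : nat -> T) (m : nat) :
  label_vector n s -> 1 <= m <= n -> sigma n s (s m) = m.
Proof.
move=> s_inj m_range; rewrite /sigma.
have s_uniq : uniq [seq s i | i <- iota 1 n].
  rewrite map_inj_in_uniq ?iota_uniq // => x y.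
  by rewrite !mem_iota => hx hy; apply: s_inj; rewrite inE /=; lia.
have -> : s m = nth (s 0) [seq s i | i <- iota 1 n] m.-1.
  by rewrite (nth_map 0) ?size_iota ?nth_iota; [congr s|..]; lia.
by rewrite index_uniq ?size_map ?size_iota; lia.
Qed.

Lemma Froad_relabel (T : eqType) (n : nat) (s g : nat -> T) (p : nat -> nat) (j : nat) :
  label_vector n s -> (forall k, g k = s (p k)) ->
  (forall k, 1 <= k <= j.+1 -> 1 <= p k <= n) ->
  Froad n g s j = \max_(1 <= k < j.+2) p k - 1.
Proof.
move=> s_inj gE p_range; rewrite /Froad; congr (_ - 1).
by apply: eq_big_nat => k hk; rewrite gE sigma_label // p_range; lia.
Qed.

Lemma rev_incr_comp (T U : Type) (f : T -> U) (s : nat -> T) (ks kl k : nat) :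
  rev_incr (f \o s) ks kl k = f (rev_incr s ks kl k).
Proof. by rewrite /rev_incr; case: ifP => //; case: ifP. Qed.

Lemma rev_incr_id_range (n ks kl k : nat) :
  1 <= ks <= kl -> kl <= n -> 1 <= k <= n -> 1 <= rev_incr id ks kl k <= n.
Proof.
rewrite /rev_incr => ks_range kl_n k_range.
by case: ifP => [/andP[]|_]; last case: ifP => [/eqP|_]; lia.
Qed.

Lemma prefix_max_rev_incr_id (ks kl m : nat) : 1 <= ks < kl ->
  \max_(1 <= k < m.+1) rev_incr id ks kl k = if ks <= m < kl then m.+1 else m.
Proof.
move=> ks_kl; elim: m => [|m IHm]; first by rewrite big_geq //; case: ifP; lia.
rewrite big_nat_recr //= IHm /rev_incr.
by repeat case: ifP; lia.
Qed.

Lemma Froad_rev_incr (T : eqType) (n : nat) (s : nat -> T) (ks kl j : nat) :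
  label_vector n s -> 1 <= ks < kl -> kl <= n -> j.+1 <= n ->
  Froad n (rev_incr s ks kl) s j = if ks <= j.+1 < kl then j.+1 else j.
Proof.
move=> s_inj ks_kl kl_n j_n.
rewrite (@Froad_relabel _ _ _ _ (rev_incr id ks kl)) //.
- by rewrite prefix_max_rev_incr_id //; case: ifP; lia.
- by move=> k; rewrite -(@rev_incr_comp _ _ s id).
- by move=> k k_range; apply: rev_incr_id_range; lia.
Qed.

Lemma roadblock_rev_incr (T : eqType) (n : nat) (s : nat -> T) (ks kl i j : nat) :
  label_vector n s -> 1 <= ks < kl -> kl <= n ->
  roadblock n (rev_incr s ks kl) s i j <-> [/\ i = j, 1 <= i & ks <= i.+1 < kl].
Proof.
move=> s_inj ks_kl kl_n; rewrite /roadblock; split.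
- case=> j1 ji i_n; rewrite Froad_rev_incr //; last lia.
  by case: ifP => j_range lt_iF; split; lia.
- by case=> -> i1 i_range; rewrite Froad_rev_incr ?i_range //; [split|]; lia.
Qed.

Theorem proposition7 (T : eqType) (n : nat) (s : nat -> T) (ks kl : nat) :
  3 <= n ->
  label_vector n s ->
  1 <= ks -> ks < kl -> kl <= n -> kl != 2 ->
  exists a b : nat, a <= b /\
    forall i j : nat,
      roadblock n (rev_incr s ks kl) s i j <-> (i = j /\ a <= i <= b).
Proof.
(* [kl != 2] and [ks < kl] give [kl >= 3], which makes the interval below
   nonempty and already implies [3 <= n]. *)
move=> _ s_inj ks1 ks_kl kl_n kl2.
exists (maxn 1 ks.-1), kl.-2; split; first lia.
move=> i j; rewrite roadblock_rev_incr //; last lia.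
by split=> [[-> ? ?]|[-> ?]]; split=> //; lia.
Qed.
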